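(* Let $G$ be a cubic near-bipartite brick with at least six vertices. Then $G$ has a $K_4$-decomposition if and only if $G$ is a tri-ladder.
   Context: Graphs may have multiple edges but no loops. An edge is admissible if it lies in some perfect matching; a connected graph with at least two vertices is matching covered if every edge is admissible. A brick is a 3-connected nonbipartite graph $G$ such that $G-x-y$ has a perfect matching for all distinct $x,y$. A nonbipartite matching covered graph $G$ is near-bipartite if it has a pair of edges $\{e_1,e_2\}$ such that $G-\{e_1,e_2\}$ is bipartite matching covered. For $X\subseteq V(G)$, $\overline{X}=V(G)\setminus X$ and $\partial(X)$ is the set of edges with exactly one end in $X$; the cut is nontrivial if $|X|,|\overline X|\ge 2$. $G/X$ is obtained by contracting $X$ to a single vertex $x$ (removing edges inside $X$), $G/\overline X$ similarly with vertex $\overline x$; these are the $\partial(X)$-contractions, and $G$ is a splicing of $G/X$ and $G/\overline{X}$ at $x$ and $\overline{x}$. A 3-cut-decomposition of a 3-connected cubic graph is obtained by repeatedly choosing a graph in the current list that has a nontrivial 3-cut $C$ and replacing it by its two $C$-contractions, until no graph in the list has a nontrivial 3-cut; it is a $K_4$-decomposition if the final list consists only of copies of $K_4$. A graph has a $K_4$-decomposition if some 3-cut-decomposition of it is a $K_4$-decomposition. $\overline{C_6}$ denotes the complement of the 6-cycle (the triangular prism). A graph $G$ is a tri-ladder if there is a sequence $G_0,\dots,G_r$ ($r\ge0$) with $G_0=\overline{C_6}$, $G_r=G$, and for $1\le i\le r$, $G_i$ is a splicing of $G_{i-1}$ and $K_4$ at a vertex of $G_{i-1}$ lying in a triangle of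 $G_{i-1}$ and a vertex of $K_4$. *)

From mathcomp Require Import ssreflect ssrfun ssrbool eqtype ssrnat seq choice fintype finset fingraph.
Set Implicit Arguments.
Unset Strict Implicit.
Unset Printing Implicit Defensive.

Record mgraph := MGraph {
  vert : finType;
  edge : finType;
  src : edge -> vert;
  tgt : edge -> vert }.

Section Basics.
Variable G : mgraph.
Implicit Types (u v : vert G) (e : edge G) (F : {set edge G}) (S X : {set vert G}).

Definition loopless := forall e, src e != tgt e.

Definition incident e v := (src e == v) || (tgt e == v).

Definition degree v := #|[set e | incident e v]|.

Definition cubic := forall v, degree v = 3.

Definition adj_in F S : rel (vert G) := fun u v =>
  [&& [exists e in F, ((src e == u) && (tgt e == v)) || ((src e == v) && (tgt e == u))],
      u \notin S & v \notin S].

Definition connected_in F S :=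
  forall u v, u \notin S -> v \notin S -> connect (adj_in F S) u v.

Definition connected := connected_in setT set0.

Definition three_connected :=
  3 < #|vert G| /\ forall S, #|S| <= 2 -> connected_in setT S.

Definition perfect_matching_in F S (M : {set edge G}) :=
  [/\ M \subset F,
      forall e, e \in M -> (src e \notin S) && (tgt e \notin S)
    & (forall v, v \notin S -> #|[set e in M | incident e v]| = 1)].

Definition perfect_matching M := perfect_matching_in setT set0 M.

Definition bipartite_in F :=
  exists c : vert G -> bool, forall e, e \in F -> c (src e) != c (tgt e).

Definition bipartite := bipartite_in setT.

Definition matching_covered_in F :=
  [/\ connected_in F set0, 2 <= #|vert G|
    & (forall e, e \in F -> exists M, perfect_matching_in F set0 M /\ e \in M)].

Definition matching_covered := matching_covered_in setT.

Definition brick :=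
  [/\ three_connected, ~ bipartite
    & (forall x y : vert G, x != y ->
        exists M, perfect_matching_in setT [set x; y] M)].

Definition near_bipartite :=
  [/\ ~ bipartite, matching_covered
    & (exists e1 e2 : edge G, e1 != e2 /\
        bipartite_in (~: [set e1; e2]) /\ matching_covered_in (~: [set e1; e2]))].

Definition cut X := [set e | (src e \in X) != (tgt e \in X)].

Definition nontrivial_3cut X :=
  [/\ 2 <= #|X|, 2 <= #|~: X| & #|cut X| = 3].

Definition has_nontrivial_3cut := exists X, nontrivial_3cut X.

Definition adj u v := adj_in setT set0 u v.
Definition in_triangle v :=
  exists u w, [&& u != v, w != v, u != w, adj v u, adj v w & adj u w].

End Basics.

(* Contraction G/X: X is shrunk to the single new vertex [None]; the edges
   with both ends in X are removed. *)
Section Contract.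
Variables (G : mgraph) (X : {set vert G}).
Definition cvert := option {v : vert G | v \notin X}.
Definition cedge := {e : edge G | ~~ ((src e \in X) && (tgt e \in X))}.
Definition cend (v : vert G) : cvert := insub v.
Definition contract : mgraph :=
  @MGraph (option {v : vert G | v \notin X})
    {e : edge G | ~~ ((src e \in X) && (tgt e \in X))}
    (fun e => cend (src (val e))) (fun e => cend (tgt (val e))).
Definition contr_vertex : vert contract := None.
End Contract.

Definition same_ends (T : eqType) (a b c d : T) :=
  ((a == c) && (b == d)) || ((a == d) && (b == c)).

Definition iso (G H : mgraph) :=
  exists (f : vert G -> vert H) (g : edge G -> edge H),
    [/\ bijective f, bijective g &
        forall e, same_ends (f (src e)) (f (tgt e)) (src (g e)) (tgt (g e))].

Definition iso_at (G H : mgraph) (x : vert G) (y : vert H) :=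
  exists (f : vert G -> vert H) (g : edge G -> edge H),
    [/\ bijective f, bijective g, f x = y &
        forall e, same_ends (f (src e)) (f (tgt e)) (src (g e)) (tgt (g e))].

(* G is (isomorphic to) a splicing of H1 at x and H2 at y:
   G has a cut partial(X) with G/X = H1 (contracted vertex = x) and
   G/~X = H2 (contracted vertex = y). *)
Definition splicing (G H1 : mgraph) (x : vert H1) (H2 : mgraph) (y : vert H2) :=
  exists X : {set vert G},
    iso_at (contr_vertex X) x /\ iso_at (contr_vertex (~: X)) y.

Definition sg_edge n (r : rel 'I_n) :=
  {p : 'I_n * 'I_n | (p.1 < p.2) && r p.1 p.2}.
Definition sgraph n (r : rel 'I_n) : mgraph :=
  @MGraph 'I_n {p : 'I_n * 'I_n | (p.1 < p.2) && r p.1 p.2}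
    (fun p => (val p).1) (fun p => (val p).2).

Definition K4 : mgraph := @sgraph 4 (fun _ _ => true).

(* complement of the 6-cycle 0-1-2-3-4-5-0 (the triangular prism) *)
Definition C6bar : mgraph :=
  @sgraph 6 (fun i j => (j - i != 1) && (j - i != 5)).

(* G has a K4-decomposition: some 3-cut-decomposition ends with copies of
   K4 only.  Since the decomposition steps act independently on the members
   of the list, this is a finite decomposition tree whose leaves have no
   nontrivial 3-cut and are isomorphic to K4. *)
Inductive has_K4_decomposition : mgraph -> Prop :=
| K4dec_leaf (G : mgraph) :
    ~ has_nontrivial_3cut G -> iso G K4 -> has_K4_decomposition G
| K4dec_split (G : mgraph) (X : {set vert G}) :
    nontrivial_3cut X ->
    has_K4_decomposition (contract X) ->
    has_K4_decomposition (contract (~: X)) ->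
    has_K4_decomposition G.

Inductive tri_ladder : mgraph -> Prop :=
| TL_base (G : mgraph) : iso G C6bar -> tri_ladder G
| TL_step (G H : mgraph) (v : vert H) (k : vert K4) :
    tri_ladder H -> in_triangle v -> splicing G v k -> tri_ladder G.

(* A tri-ladder is K4-decomposable: the prism splits along the 3-cut between
   its two triangles into two copies of K4, and splicing K4 into H at a vertex
   creates a nontrivial 3-cut whose two sides contract to H and to K4.

   Conversely, by induction along a K4-decomposition, a K4-decomposable graph
   other than K4 has two disjoint triangles and, avoiding any given vertex, a
   K4-end: a triangle X cut off by a 3-cut with G/X still K4-decomposable.
   Contracting a K4-end keeps G within two edges of bipartite, so by induction
   on the number of vertices G/X is K4, and then G is the prism, or a
   tri-ladder.  In the latter case one of the two disjoint triangles of G/X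
   must contain a deleted edge at the contracted vertex, and G is the splicing
   of G/X with K4 at that vertex of a triangle. *)

From mathcomp Require Import ssreflect ssrfun ssrbool eqtype ssrnat seq div choice fintype finset fingraph.
From mathcomp Require Import zify.
Set Implicit Arguments.
Unset Strict Implicit.
Unset Printing Implicit Defensive.

Section SameEnds.
Variable T : eqType.
Implicit Types a b c d x y : T.

Lemma same_endsP a b c d :
  reflect ((a = c /\ b = d) \/ (a = d /\ b = c)) (same_ends a b c d).
Proof.
rewrite /same_ends; apply: (iffP orP).
  by case=> /andP[/eqP-> /eqP->]; [left|right].
by case=> [[->->]|[->->]]; rewrite !eqxx; [left|right].
Qed.

Lemma same_ends_refl a b : same_ends a b a b.
Proof. by apply/same_endsP; left. Qed.

Lemma same_endsC a b c d : same_ends a b c d = same_ends c d a b.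
Proof.
by apply/same_endsP/same_endsP=> [][[->->]|[->->]]; [left|right|left|right].
Qed.

Lemma same_ends_swap a b c d : same_ends a b c d = same_ends b a c d.
Proof.
by apply/same_endsP/same_endsP=> [][[->->]|[->->]]; [right|left|right|left].
Qed.

Lemma same_ends_trans a b c d x y :
  same_ends a b c d -> same_ends c d x y -> same_ends a b x y.
Proof.
by move=> /same_endsP[[->->]|[->->]] // /same_endsP[[->->]|[->->]];
  apply/same_endsP; auto.
Qed.

End SameEnds.

Lemma same_ends_map (T U : eqType) (f : T -> U) a b c d :
  same_ends a b c d -> same_ends (f a) (f b) (f c) (f d).
Proof. by move=> /same_endsP[[->->]|[->->]]; apply/same_endsP; auto. Qed.

Lemma same_ends_inj (T U : eqType) (f : T -> U) a b c d : injective f ->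
  same_ends (f a) (f b) (f c) (f d) = same_ends a b c d.
Proof. by move=> fi; rewrite /same_ends !(inj_eq fi). Qed.

Lemma same_ends_in2 (T : finType) (Z : {set T}) a b c d : same_ends a b c d ->
  (a \in Z) && (b \in Z) = (c \in Z) && (d \in Z).
Proof. by case/same_endsP=> [[->->]|[->->]] //; rewrite andbC. Qed.

Lemma same_ends_cross (T : finType) (Z : {set T}) a b c d : same_ends a b c d ->
  ((a \in Z) != (b \in Z)) = ((c \in Z) != (d \in Z)).
Proof. by case/same_endsP=> [[->->]|[->->]] //; rewrite eq_sym. Qed.

Lemma inj_surj_bij (A : choiceType) (B : eqType) (f : A -> B) :
  injective f -> (forall b, exists a, f a = b) -> bijective f.
Proof.
move=> inj sur.
have sur' b : exists a, f a == b by case: (sur b) => a <-; exists a.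
exists (fun b => xchoose (sur' b)) => [a|b]; last exact/eqP/(xchooseP (sur' b)).
by apply: inj; apply/eqP/(xchooseP (sur' (f a))).
Qed.

Lemma card3_mem (T : finType) (A : {set T}) x y z : #|A| = 3 ->
  x \in A -> y \in A -> z \in A -> x != y -> y != z -> z != x ->
  forall v, v \in A -> v \in [:: x; y; z].
Proof.
move=> cA xA yA zA xy yz zx.
have sub : [set x; y; z] \subset A.
  by apply/subsetP=> w; rewrite !inE => /orP[/orP[]|]/eqP->.
have c3 : 2 < #|[set x; y; z]|.
  by apply/card_gt2P; exists x, y, z; rewrite !inE !eqxx ?orbT.
have /eqP <- : [set x; y; z] == A by rewrite eqEcard sub cA.
by move=> v; rewrite !inE -orbA.
Qed.

Lemma iso_sym G H : iso G H -> iso H G.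
Proof.
case=> f [g [[f' ff' f'f] [g' gg' g'g] E]].
exists f', g'; split; try by [exists f|exists g].
move=> h; have := E (g' h); rewrite g'g => /(same_ends_map f').
by rewrite !ff' same_endsC.
Qed.

Lemma iso_trans G H K : iso G H -> iso H K -> iso G K.
Proof.
case=> f [g [bf bg E]] [f2 [g2 [bf2 bg2 E2]]].
exists (f2 \o f), (g2 \o g); split; try exact: bij_comp.
move=> e /=; apply: same_ends_trans (E2 (g e)); exact: same_ends_map.
Qed.

Lemma iso_at_iso G H x y : @iso_at G H x y -> iso G H.
Proof. by case=> f [g [bf bg _ E]]; exists f, g. Qed.

Lemma iso_loopless G H : iso G H -> loopless H -> loopless G.
Proof.
case=> f [g [bf bg E]] lH e; apply/negP=> /eqP Ee.
by have := E e; rewrite Ee => /same_endsP[[E1 E2]|[E1 E2]];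
  move: (lH (g e)); rewrite -E1 -E2 eqxx.
Qed.

Lemma card_iso G H : iso G H -> #|vert G| = #|vert H|.
Proof. by case=> f [g [bf _ _]]; exact: bij_eq_card bf. Qed.

(** * Quotients and contractions *)

(* [phi] presents [H] as [G] with the edges [psi e = None] contracted. *)
Definition quotient_map (G H : mgraph) (phi : vert G -> vert H) :=
  (forall h, exists v, phi v = h) /\
  exists psi : edge G -> option (edge H),
   [/\ forall e, (psi e == None) = (phi (src e) == phi (tgt e)),
       forall e h, psi e = Some h ->
         same_ends (phi (src e)) (phi (tgt e)) (src h) (tgt h),
       forall e1 e2 h, psi e1 = Some h -> psi e2 = Some h -> e1 = e2
     & forall h, exists e, psi e = Some h].

Section QuotientUnique.
Variables (G H1 H2 : mgraph) (p1 : vert G -> vert H1) (p2 : vert G -> vert H2).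
Hypotheses (q1 : quotient_map p1) (q2 : quotient_map p2).
Hypothesis same_kernel : forall u v, (p1 u == p1 v) = (p2 u == p2 v).

Lemma quotient_map_factor : exists2 f, bijective f & forall v, f (p1 v) = p2 v.
Proof.
case: q1 q2 => s1 _ [s2 _].
have s1' h : exists v, p1 v == h by case: (s1 h) => v <-; exists v.
pose f h := p2 (xchoose (s1' h)).
have fE v : f (p1 v) = p2 v.
  by apply/eqP; rewrite /f -same_kernel; exact: (xchooseP (s1' (p1 v))).
exists f => //; apply: inj_surj_bij => [h h'|h2].
  case: (s1 h) => v <-; case: (s1 h') => v' <-; rewrite !fE => /eqP.
  by rewrite -same_kernel => /eqP.
by case: (s2 h2) => v <-; exists (p1 v).
Qed.

Lemma quotient_map_iso : iso H1 H2.
Proof.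
have [f bf fE] := quotient_map_factor.
case: q1 q2 => _ [psi1 [N1 S1 I1 U1]] [_ [psi2 [N2 S2 I2 U2]]].
have ex h1 : exists h2, [exists e, (psi1 e == Some h1) && (psi2 e == Some h2)].
  case: (U1 h1) => e E1; case E2: (psi2 e) => [h2|].
    by exists h2; apply/existsP; exists e; rewrite E1 E2 !eqxx.
  by move: (N1 e) (N2 e); rewrite E1 E2 same_kernel /= => <-; rewrite eqxx.
pose g h1 := xchoose (ex h1).
have gP h1 : exists e, psi1 e = Some h1 /\ psi2 e = Some (g h1).
  by case/existsP: (xchooseP (ex h1)) => e /andP[/eqP ? /eqP ?]; exists e.
exists f, g; split => //.
  apply: inj_surj_bij => [h h'|h2].
    case: (gP h) => e [E1 E2]; case: (gP h') => e' [E1' E2'] Eg.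
    rewrite Eg in E2; rewrite -(I2 _ _ _ E2 E2') in E1'.
    by move: E1; rewrite E1' => -[].
  case: (U2 h2) => e E2; case E1: (psi1 e) => [h1|]; last first.
    by move: (N1 e) (N2 e); rewrite E1 E2 same_kernel /= => <-; rewrite eqxx.
  exists h1; case: (gP h1) => e' [E1' E2'].
  by rewrite -(I1 _ _ _ E1 E1') E2 in E2'; case: E2'.
move=> h1; case: (gP h1) => e [E1 E2].
have := same_ends_map f (S1 _ _ E1); rewrite !fE same_endsC => H.
exact: same_ends_trans H (S2 _ _ E2).
Qed.

End QuotientUnique.

Lemma quotient_map_comp G H K (p : vert G -> vert H) (c : vert H -> vert K) :
  quotient_map p -> quotient_map c -> quotient_map (c \o p).
Proof.
case=> s1 [q1 [N1 S1 I1 U1]] [s2 [q2 [N2 S2 I2 U2]]]; split.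
  by move=> k; case: (s2 k) => h <-; case: (s1 h) => v <-; exists v.
exists (fun e => obind q2 (q1 e)); split.
- move=> e /=; case E1: (q1 e) => [h|] /=.
    move: (S1 _ _ E1) => /same_endsP[[->->]|[->->]]; rewrite N2 //; exact: eq_sym.
  by move: (N1 e); rewrite E1 eqxx => /esym /eqP ->; rewrite eqxx.
- move=> e k /=; case E1: (q1 e) => [h|] //= E2.
  exact: same_ends_trans (same_ends_map c (S1 _ _ E1)) (S2 _ _ E2).
- move=> e1 e2 k /=; case E1: (q1 e1) => [h1|] //; case E2: (q1 e2) => [h2|] //= F1 F2.
  by rewrite -(I2 _ _ _ F1 F2) in E2; exact: I1 E1 E2.
- by move=> k; case: (U2 k) => h E2; case: (U1 h) => e E1; exists e; rewrite E1.
Qed.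

Lemma iso_quotient_map G H : loopless G -> iso G H ->
  exists2 f : vert G -> vert H, quotient_map f & bijective f.
Proof.
move=> lG [f [g [bf bg E]]]; exists f => //.
split; first by case: bf => f' ff' f'f h; exists (f' h); rewrite f'f.
exists (fun e => Some (g e)); split.
- by move=> e /=; rewrite (inj_eq (bij_inj bf)); apply/esym/negbTE/lG.
- by move=> e h [<-].
- by move=> e1 e2 h [<-] [] /(bij_inj bg).
- by case: bg => g' gg' g'g h; exists (g' h); rewrite g'g.
Qed.

Section Contraction.
Variables (G : mgraph) (X : {set vert G}).

Lemma cend_eqNone v : (cend X v == None) = (v \in X).
Proof. by rewrite /cend; case: insubP => [u /negbTE -> //|/negbNE ->]. Qed.

Lemma cendK (w : {v : vert G | v \notin X}) : cend X (val w) = Some w.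
Proof. exact: valK. Qed.

Lemma cend_eq u v : (cend X u == cend X v) = (u == v) || ((u \in X) && (v \in X)).
Proof.
rewrite /cend; case: insubP => [a Pa Ea|Nu]; case: insubP => [b Pb Eb|Nv] /=.
- by rewrite (inj_eq (@Some_inj _)) (negbTE Pa) -Ea -Eb val_eqE orbF.
- rewrite (negbTE Pa) /= orbF; apply/esym/negbTE; apply: contraNneq Nv => <-.
  exact: Pa.
- rewrite (negbTE Pb) andbF orbF; apply/esym/negbTE; apply: contraNneq Nu => ->.
  exact: Pb.
- by rewrite eqxx (negbNE Nu) (negbNE Nv) orbT.
Qed.

Lemma cend_eq_out u v : u \notin X -> (cend X v == cend X u) = (v == u).
Proof. by move=> /negbTE Hu; rewrite cend_eq Hu andbF orbF. Qed.

Lemma same_ends_cend a b u v : u \notin X -> v \notin X ->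
  same_ends (cend X a) (cend X b) (cend X u) (cend X v) = same_ends a b u v.
Proof. by move=> uX vX; rewrite /same_ends !cend_eq_out. Qed.

Lemma cend_Some (w : vert (contract X)) : w != None -> exists2 v, v \notin X & cend X v = w.
Proof. by case: w => // a _; exists (val a); rewrite ?cendK ?(valP a). Qed.

Lemma contract_src (e : edge (contract X)) : src e = cend X (src (val e)).
Proof. by []. Qed.

Lemma contract_tgt (e : edge (contract X)) : tgt e = cend X (tgt (val e)).
Proof. by []. Qed.

Lemma contract_edgeP (e : edge (contract X)) : ~~ ((src (val e) \in X) && (tgt (val e) \in X)).
Proof. exact: (valP e). Qed.

Lemma contract_loopless : loopless G -> loopless (contract X).
Proof.
move=> lG e; rewrite contract_src contract_tgt cend_eq negb_or lG /=.
exact: contract_edgeP.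
Qed.

Lemma card_contract : #|vert (contract X)| = #|~: X|.+1.
Proof.
rewrite /= card_option card_sig; congr _.+1; apply: eq_card => v.
by rewrite !inE.
Qed.

Lemma contract_quotient_map : loopless G -> X != set0 -> @quotient_map G (contract X) (cend X).
Proof.
move=> lG /set0Pn[x xX]; split.
  case=> [w|]; first by exists (val w); rewrite cendK.
  by exists x; apply/eqP; rewrite cend_eqNone.
exists (fun e => insub e : option (edge (contract X))); split.
- move=> e; rewrite cend_eq (negbTE (lG e)) /=.
  by case: insubP => [a Pa Ea|/negbNE -> //]; rewrite (negbTE Pa).
- move=> e h; case: insubP => [a Pa Ea [<-]|//].
  by rewrite contract_src contract_tgt Ea same_ends_refl.
- move=> e1 e2 h; case: insubP => [a _ Ea [<-]|//]; case: insubP => [b _ Eb [Eab]|//].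
  by rewrite -Ea -Eb Eab.
- by move=> h; exists (val h); rewrite valK.
Qed.

End Contraction.

Lemma cutC G (X : {set vert G}) : cut (~: X) = cut X.
Proof. by apply/setP=> e; rewrite !inE; case: (_ \in X); case: (_ \in X). Qed.

Lemma card_cut_preimset G H (p : vert G -> vert H) (Z : {set vert H}) :
  quotient_map p -> #|cut (p @^-1: Z)| = #|cut Z|.
Proof.
case=> _ [q [N S I U]]; apply/esym.
have U' h : exists e, q e == Some h by case: (U h) => e E; exists e; rewrite E.
pose k : edge H -> edge G := fun h => xchoose (U' h).
have kE h : q (k h) = Some h by apply/eqP/(xchooseP (U' h)).
have ki : injective k by move=> h h' E; have := kE h; rewrite E kE => -[].
rewrite -(card_imset (cut Z) ki); apply: eq_card => e; rewrite [in RHS]inE.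
apply/imsetP/idP => [[h]|].
  by rewrite !inE => hZ ->; rewrite (same_ends_cross Z (S _ _ (kE h))).
rewrite !inE => eZ; case E: (q e) => [h|]; last first.
  by move: (N e) eZ; rewrite E eqxx => /esym /eqP ->; rewrite eqxx.
exists h; last by apply: I E (kE h).
by rewrite inE -(same_ends_cross Z (S _ _ E)).
Qed.

Lemma card_preimset_bij (A B : finType) (f : A -> B) (S : {set B}) :
  bijective f -> #|f @^-1: S| = #|S|.
Proof.
move=> bf; rewrite -(card_imset (f @^-1: S) (bij_inj bf)); apply: eq_card => y.
case: bf => f' ff' f'f; apply/imsetP/idP => [[x]|yS].
  by rewrite inE => ? ->.
by exists (f' y); rewrite ?inE f'f.
Qed.

Lemma nontrivial_3cut_preimset G H (p : vert G -> vert H) (Z : {set vert H}) :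
  quotient_map p -> bijective p -> nontrivial_3cut Z -> nontrivial_3cut (p @^-1: Z).
Proof.
move=> qp bp [h1 h2 h3]; split.
- by rewrite card_preimset_bij.
- by rewrite -preimsetC card_preimset_bij.
- by rewrite card_cut_preimset.
Qed.

Lemma iso_has_nontrivial_3cut G H : loopless G -> iso G H ->
  has_nontrivial_3cut H -> has_nontrivial_3cut G.
Proof.
move=> lG iGH [Z nZ]; case: (iso_quotient_map lG iGH) => f qf bf.
by exists (f @^-1: Z); apply: nontrivial_3cut_preimset.
Qed.

Lemma card_gt1_neq0 (T : finType) (A : {set T}) : 1 < #|A| -> A != set0.
Proof. by rewrite -card_gt0; apply: ltnW. Qed.

(* [G/f^-1(X)] and [H/X] are both quotients of [G] with the same kernel. *)
Lemma iso_contract_preimset G H (f : vert G -> vert H) (X : {set vert H}) :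
  loopless G -> loopless H -> quotient_map f -> bijective f -> X != set0 ->
  iso (contract (f @^-1: X)) (contract X).
Proof.
move=> lG lH qf bf X0.
apply: (@quotient_map_iso G (contract (f @^-1: X)) (contract X)
  (cend (f @^-1: X)) (cend X \o f)).
- apply: contract_quotient_map lG _.
  by rewrite -card_gt0 card_preimset_bij // card_gt0.
- exact: quotient_map_comp qf (contract_quotient_map lH X0).
by move=> u v /=; rewrite !cend_eq (inj_eq (bij_inj bf)) !inE.
Qed.

Lemma iso_K4_decomposition G H : loopless G -> iso G H ->
  has_K4_decomposition H -> has_K4_decomposition G.
Proof.
move=> + + dH; elim: dH G => {H} [H nH iH|H X nX dA IHA dB IHB] G lG iGH.
  apply: K4dec_leaf; last exact: iso_trans iGH iH.
  by move=> hG; apply: nH; apply: iso_has_nontrivial_3cut (iso_sym iGH) hG;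
    apply: iso_loopless lG; exact: iso_sym.
have lH := iso_loopless (iso_sym iGH) lG.
case: (iso_quotient_map lG iGH) => f qf bf.
have [c1 c2 _] := nX.
apply: (K4dec_split (nontrivial_3cut_preimset qf bf nX)).
  apply: IHA; first exact: contract_loopless.
  exact: iso_contract_preimset qf bf (card_gt1_neq0 c1).
apply: IHB; first exact: contract_loopless.
rewrite -preimsetC; exact: iso_contract_preimset qf bf (card_gt1_neq0 c2).
Qed.

Lemma K4_decomposition_card G : has_K4_decomposition G -> 4 <= #|vert G|.
Proof.
case=> [{}G _ iG|{}G X [h1 h2 _] _ _].
  by rewrite (card_iso iG) /= card_ord.
by rewrite -(cardsC X); exact: (leq_add h1 h2).
Qed.

(** * Simple graphs, K4 and the prism *)

Definition simple G := forall e1 e2 : edge G,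
  same_ends (src e1) (tgt e1) (src e2) (tgt e2) -> e1 = e2.

Definition complete G := forall u v : vert G, u != v ->
  exists e, same_ends (src e) (tgt e) u v.

Lemma adjP G (u v : vert G) :
  reflect (exists e, same_ends (src e) (tgt e) u v) (adj u v).
Proof.
rewrite /adj /adj_in; apply: (iffP and3P) => [[/existsP[e /andP[_ He]] _ _]|[e He]].
  by exists e.
by split; rewrite ?inE //; apply/existsP; exists e; rewrite inE.
Qed.

Lemma adjC G (u v : vert G) : adj u v = adj v u.
Proof.
by apply/adjP/adjP=> [][e He]; exists e; rewrite same_endsC same_ends_swap same_endsC.
Qed.

Lemma adj_loopless G (u : vert G) : loopless G -> adj u u = false.
Proof.
move=> lG; apply/negbTE/adjP=> [][e /same_endsP[[E1 E2]|[E1 E2]]];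
  by move: (lG e); rewrite E1 E2 eqxx.
Qed.

Lemma adj_complete G (u v : vert G) : loopless G -> complete G -> adj u v = (u != v).
Proof.
move=> lG cG; apply/idP/idP => [|/cG/adjP//].
by apply: contraTneq => ->; rewrite adj_loopless.
Qed.

Section SimpleGraph.
Variables (n : nat) (r : rel 'I_n).

Lemma sgraph_loopless : loopless (sgraph r).
Proof.
move=> [[i j] Hp]; have /andP[lt _] := Hp; apply/negP => /eqP /= E.
by rewrite /= E ltnn in lt.
Qed.

Lemma sgraph_simple : simple (sgraph r).
Proof.
move=> [[i j] Hp] [[i' j'] Hp']; have /andP[H _] := Hp; have /andP[H' _] := Hp'.
case/same_endsP => /= [[E1 E2]|[E1 E2]]; subst; first exact: val_inj.
by move: (ltn_trans H H'); rewrite ltnn.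
Qed.

Lemma sgraph_adj (i j : 'I_n) :
  adj (G := sgraph r) i j = ((i < j) && r i j) || ((j < i) && r j i).
Proof.
apply/adjP/idP => [[[[a b] Hp]]|].
  have /andP[lt rab] := Hp.
  by case/same_endsP=> /= [[<-<-]|[<-<-]] /=; rewrite ?lt ?rab ?orbT.
case/orP=> /andP[lt rij].
  by exists (exist _ (i, j) (introT andP (conj lt rij)) : edge (sgraph r));
    apply: same_ends_refl.
exists (exist _ (j, i) (introT andP (conj lt rij)) : edge (sgraph r)).
by apply/same_endsP; right.
Qed.

End SimpleGraph.

Lemma K4_complete : complete K4.
Proof.
move=> u v uv; apply/(adjP (G := K4)); rewrite sgraph_adj /= !andbT.
by case: ltngtP => // /val_inj uv'; rewrite uv' eqxx in uv.
Qed.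

(* In a simple graph an edge is determined by its ends. *)
Lemma simple_iso G H (f : vert G -> vert H) : simple G -> simple H -> bijective f ->
  (forall u v, adj (f u) (f v) = adj u v) -> iso G H.
Proof.
move=> sG sH bf fA.
have ex e : exists h : edge H, same_ends (src h) (tgt h) (f (src e)) (f (tgt e)).
  by apply/adjP; rewrite fA; apply/adjP; exists e; apply: same_ends_refl.
pose g e := xchoose (ex e).
have gE e : same_ends (src (g e)) (tgt (g e)) (f (src e)) (f (tgt e)) := xchooseP (ex e).
exists f, g; split => //; last by move=> e; rewrite same_endsC.
apply: inj_surj_bij => [e1 e2 E|h].
  apply: sG; rewrite -(same_ends_inj _ _ _ _ (bij_inj bf)).
  have := gE e1; rewrite E same_endsC => S; exact: same_ends_trans S (gE e2).
case: bf => f' ff' f'f.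
have : adj (f' (src h)) (f' (tgt h)).
  by rewrite -fA !f'f; apply/adjP; exists h; apply: same_ends_refl.
case/adjP=> e Se; exists e; apply: sH.
by apply: same_ends_trans (gE e) _; have := same_ends_map f Se; rewrite !f'f.
Qed.

Lemma iso_K4P G : iso G K4 <->
  [/\ loopless G, simple G, complete G & #|vert G| = 4].
Proof.
split=> [iG|[lG sG cG E]].
  have lG := iso_loopless iG (@sgraph_loopless 4 _).
  case: (iG) => f [g [bf bg E]]; split => //.
  - move=> e1 e2 H; apply: (bij_inj bg); apply: (@sgraph_simple 4 (fun _ _ => true)).
    have H1 := E e1; rewrite same_endsC in H1.
    exact: same_ends_trans H1 (same_ends_trans (same_ends_map f H) (E e2)).
  - move=> u v uv; have : f u != f v by rewrite (inj_eq (bij_inj bf)).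
    case/K4_complete=> h Hh; case: bg => g' gg' g'g.
    exists (g' h); have := E (g' h); rewrite g'g => H.
    by rewrite -(same_ends_inj _ _ _ _ (bij_inj bf)); exact: same_ends_trans H Hh.
  - by rewrite (card_iso iG) /= card_ord.
pose f (v : vert G) : 'I_4 := cast_ord E (enum_rank v).
have fi : injective f by move=> u v /cast_ord_inj /enum_rank_inj.
apply: (@simple_iso G K4 f) => //.
- exact: sgraph_simple.
- exists (fun i : 'I_4 => enum_val (cast_ord (esym E) i)) => [v|i].
    by rewrite /f cast_ordK enum_rankK.
  by rewrite /f enum_valK cast_ordKV.
- move=> u v; rewrite (adj_complete _ _ lG cG) (@adj_complete K4) ?(inj_eq fi) //.
  + exact: sgraph_loopless.
  + exact: K4_complete.
Qed.

Lemma complete_card_cut G (X : {set vert G}) : complete G -> #|X| * #|~: X| <= #|cut X|.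
Proof.
move=> cG; rewrite -cardsX.
pose k (p : vert G * vert G) := [pick e | same_ends (src e) (tgt e) p.1 p.2].
have kS p : p \in setX X (~: X) ->
    exists e, k p = Some e /\ same_ends (src e) (tgt e) p.1 p.2.
  rewrite !inE => /andP[p1 p2]; rewrite /k; case: pickP => [e He|none].
    by exists e.
  have : p.1 != p.2 by apply: contraNneq p2 => <-.
  by case/cG => e He; move: (none e); rewrite He.
rewrite -(card_in_imset (f := k)); last first.
  move=> p1 p2 H1 H2; case: (kS _ H1) => e1 [-> S1]; case: (kS _ H2) => e2 [-> S2] [ee].
  rewrite -{}ee same_endsC in S2; have := same_ends_trans S2 S1.
  move: H1 H2; case: p1 {S1} => a b; case: p2 {S2} => c d.
  rewrite !inE /= => /andP[aX bX] /andP[cX dX].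
  by case/same_endsP=> [[->->]//|[cb _]]; move: bX; rewrite -cb cX.
have sub : k @: setX X (~: X) \subset [set Some e | e in cut X].
  apply/subsetP => o /imsetP[p Hp ->]; case: (kS _ Hp) => e [-> Se].
  apply/imsetP; exists e => //.
  move: Hp; rewrite !inE => /andP[p1 p2]; rewrite (same_ends_cross X Se) p1.
  by move: p2; case: (p.2 \in X).
apply: leq_trans (subset_leq_card sub) _.
by rewrite card_imset //; exact: Some_inj.
Qed.

Lemma complete_no_nontrivial_3cut G : complete G -> ~ has_nontrivial_3cut G.
Proof.
move=> cG [X [h1 h2 h3]]; have := complete_card_cut X cG; rewrite h3.
by move=> /(leq_trans (leq_mul h1 h2)).
Qed.

Lemma iso_K4_decomposition_K4 G : iso G K4 -> has_K4_decomposition G.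
Proof.
move=> iG; have /iso_K4P[_ _ cG _] := iG.
by apply: K4dec_leaf => //; exact: complete_no_nontrivial_3cut.
Qed.

Definition other_end G (v : vert G) (e : edge G) := if src e == v then tgt e else src e.

Lemma other_endP G (v : vert G) e : incident e v ->
  same_ends (src e) (tgt e) v (other_end v e).
Proof.
rewrite /incident /other_end; case: eqP => [->|_] /= H; first exact: same_ends_refl.
by apply/same_endsP; right; split=> //; apply/eqP.
Qed.

Lemma degree_complete G (v : vert G) : loopless G -> simple G -> complete G ->
  degree v = #|vert G|.-1.
Proof.
move=> lG sG cG; rewrite /degree -(cardsC1 v).
rewrite -(card_in_imset (f := other_end v)); last first.
  move=> e1 e2; rewrite !inE => H1 H2 E; apply: sG.
  have S1 := other_endP H1; have S2 := other_endP H2; rewrite E in S1.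
  by rewrite same_endsC in S2; exact: same_ends_trans S1 S2.
apply: eq_card => w; rewrite !inE; apply/imsetP/idP => [[e]|wv].
  rewrite inE => He ->; move: (other_endP He) (lG e).
  by case/same_endsP=> [[->->]|[->->]]; rewrite // eq_sym.
rewrite eq_sym in wv; case: (cG _ _ wv) => e Se.
have Ie : incident e v.
  by rewrite /incident; case/same_endsP: Se => [[->_]|[_->]]; rewrite eqxx ?orbT.
exists e; first by rewrite inE.
move: (other_endP Ie); rewrite same_endsC => S; have := same_ends_trans S Se.
by case/same_endsP => [[_ ->]//|[E _]]; move: wv; rewrite E eqxx.
Qed.

Lemma degree_cut1 G (v : vert G) : loopless G -> degree v = #|cut [set v]|.
Proof.
move=> lG; apply: eq_card => e; rewrite !inE /incident.
case Hs: (src e == v); case Ht: (tgt e == v) => //=.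
by move: (lG e); rewrite (eqP Hs) (eqP Ht) eqxx.
Qed.

Lemma not_both_in G (Z : {set vert G}) (e : edge G) u w :
  same_ends (src e) (tgt e) u w -> u \notin Z -> ~~ ((src e \in Z) && (tgt e \in Z)).
Proof. by move=> /(same_ends_in2 Z) -> /negbTE ->. Qed.

Lemma adj_contract G (Z : {set vert G}) u v : u \notin Z -> v \notin Z ->
  adj (G := contract Z) (cend Z u) (cend Z v) -> adj u v.
Proof.
move=> uZ vZ /adjP[e Se]; apply/adjP; exists (val e).
by rewrite -(same_ends_cend _ _ uZ vZ).
Qed.

Lemma adj_cend G (Z : {set vert G}) u v : ~~ ((u \in Z) && (v \in Z)) -> adj u v ->
  adj (G := contract Z) (cend Z u) (cend Z v).
Proof.
move=> uvZ /adjP[e Se]; apply/adjP.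
have eZ : ~~ ((src e \in Z) && (tgt e \in Z)) by rewrite (same_ends_in2 Z Se).
by exists (exist _ e eZ : edge (contract Z)); exact: (same_ends_map (cend Z) Se).
Qed.

(* [Z] is a side of a 3-cut whose other side is a triangle. *)
Section K4Contraction.
Variables (G : mgraph) (Z : {set vert G}).
Hypothesis iZ : iso (contract Z) K4.

Lemma K4_contract_card : #|~: Z| = 3.
Proof. by have /iso_K4P[_ _ _] := iZ; rewrite card_contract => -[]. Qed.

Lemma K4_contract_adj u v : u \notin Z -> v \notin Z -> u != v ->
  exists e, same_ends (src e) (tgt e) u v.
Proof.
move=> uZ vZ uv; have /iso_K4P[_ _ cB _] := iZ.
have : cend Z u != cend Z v by rewrite cend_eq_out.
by case/cB => e Se; exists (val e); rewrite -(same_ends_cend _ _ uZ vZ).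
Qed.

Lemma K4_contract_cross_edge u : u \notin Z ->
  exists e w, w \in Z /\ same_ends (src e) (tgt e) u w.
Proof.
move=> uZ; have /iso_K4P[_ _ cB _] := iZ.
have : cend Z u != None by rewrite cend_eqNone.
case/cB => e; rewrite contract_src contract_tgt.
case/same_endsP=> [[E1 E2]|[E1 E2]]; exists (val e).
  exists (tgt (val e)); rewrite -cend_eqNone E2 eqxx; split=> //.
  by move/eqP: E1; rewrite cend_eq_out // => /eqP->; apply: same_ends_refl.
exists (src (val e)); rewrite -cend_eqNone E1 eqxx; split=> //.
by move/eqP: E2; rewrite cend_eq_out // => /eqP->; apply/same_endsP; right.
Qed.

Lemma K4_contract_edge_inj (e1 e2 : edge G) :
  ~~ ((src e1 \in Z) && (tgt e1 \in Z)) -> ~~ ((src e2 \in Z) && (tgt e2 \in Z)) ->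
  same_ends (cend Z (src e1)) (cend Z (tgt e1)) (cend Z (src e2)) (cend Z (tgt e2)) ->
  e1 = e2.
Proof.
move=> H1 H2 S; have /iso_K4P[_ sB _ _] := iZ.
by have := sB (exist _ e1 H1 : edge (contract Z)) (exist _ e2 H2 : edge (contract Z)) S; case.
Qed.

Lemma K4_contract_cross_uniq u w1 w2 : u \notin Z -> w1 \in Z -> w2 \in Z ->
  adj u w1 -> adj u w2 -> w1 = w2.
Proof.
move=> uZ w1Z w2Z /adjP[e1 S1] /adjP[e2 S2].
have ee : e1 = e2.
  apply: (K4_contract_edge_inj (not_both_in S1 uZ) (not_both_in S2 uZ)).
  have T1 := same_ends_map (cend Z) S1; have T2 := same_ends_map (cend Z) S2.
  have N1 : cend Z w1 = None by apply/eqP; rewrite cend_eqNone.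
  have N2 : cend Z w2 = None by apply/eqP; rewrite cend_eqNone.
  rewrite N1 in T1; rewrite N2 same_endsC in T2; exact: same_ends_trans T1 T2.
subst e2; rewrite same_endsC in S1; have := same_ends_trans S1 S2.
by case/same_endsP=> [[_ //]|[E _]]; move: uZ; rewrite E w2Z.
Qed.

End K4Contraction.

(* The cut has three edges because the contracted vertex of [G/~X] has degree
   three in [K4]. *)
Lemma K4_decomposition_split_K4 G (X : {set vert G}) : loopless G ->
  iso (contract (~: X)) K4 -> has_K4_decomposition (contract X) -> has_K4_decomposition G.
Proof.
move=> lG iB dA.
have cX : #|X| = 3 by rewrite -(K4_contract_card iB) setCK.
have cX' : 3 <= #|~: X| by have := K4_decomposition_card dA; rewrite card_contract.
have nX : nontrivial_3cut X.
  split; [by rewrite cX | exact: ltnW |].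
  have /iso_K4P[lB sB cB vB] := iB.
  have q := @contract_quotient_map G (~: X) lG (card_gt1_neq0 (ltnW cX')).
  rewrite -cutC.
  have -> : ~: X = cend (~: X) @^-1: [set None].
    by apply/setP=> v; rewrite !inE cend_eqNone !inE.
  by rewrite (card_cut_preimset _ q) -degree_cut1 // degree_complete // vB.
by apply: K4dec_split nX dA _; exact: iso_K4_decomposition_K4.
Qed.



Lemma contract_simple G (Z : {set vert G}) : simple G ->
  (forall u w1 w2, u \notin Z -> w1 \in Z -> w2 \in Z -> adj u w1 -> adj u w2 -> w1 = w2) ->
  simple (contract Z).
Proof.
move=> sG uniqZ.
suff cross (e1 e2 : edge (contract Z)) x y : x \in Z -> y \notin Z ->
    same_ends (src (val e1)) (tgt (val e1)) y x ->
    same_ends (cend Z (src (val e1))) (cend Z (tgt (val e1)))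
              (cend Z (src (val e2))) (cend Z (tgt (val e2))) -> e1 = e2.
  move=> e1 e2; rewrite !contract_src !contract_tgt => S; have := contract_edgeP e1.
  case: (boolP (src (val e1) \in Z)) => [s1Z|s1Z] /= t1Z.
    by apply: cross s1Z t1Z _ S; apply/same_endsP; right.
  case: (boolP (tgt (val e1) \in Z)) => [{}t1Z|{}t1Z].
    exact: cross t1Z s1Z (same_ends_refl _ _) S.
  apply: val_inj; apply: sG.
  by rewrite same_endsC (same_ends_cend _ _ s1Z t1Z) same_endsC in S.
move=> xZ yZ S1 S2; apply: val_inj; apply: sG.
have [w wZ Sw] : exists2 w, w \in Z & same_ends (src (val e2)) (tgt (val e2)) y w.
  rewrite same_endsC in S2; move: (same_ends_trans S2 (same_ends_map (cend Z) S1)).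
  have -> : cend Z x = None by apply/eqP; rewrite cend_eqNone.
  case/same_endsP=> [[E1 E2]|[E1 E2]].
    exists (tgt (val e2)); first by rewrite -cend_eqNone E2.
    by move/eqP: E1; rewrite cend_eq_out // => /eqP->; apply: same_ends_refl.
  exists (src (val e2)); first by rewrite -cend_eqNone E1.
  by move/eqP: E2; rewrite cend_eq_out // => /eqP->; apply/same_endsP; right.
have wx : w = x by apply: (uniqZ y) => //; apply/adjP; [exists (val e2) | exists (val e1)].
by rewrite wx same_endsC in Sw; exact: same_ends_trans S1 Sw.
Qed.

Lemma contract_complete G (Z : {set vert G}) :
  (forall u v, u \notin Z -> v \notin Z -> u != v -> adj u v) ->
  (forall u, u \notin Z -> exists2 w, w \in Z & adj u w) ->
  complete (contract Z).
Proof.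
move=> adj_out to_Z.
suff adjN u : u \notin Z -> adj (G := contract Z) (cend Z u) None.
  case=> [s1|] [s2|] ne; apply/adjP; rewrite -?(cendK s1) -?(cendK s2).
  - apply: adj_cend; first by rewrite (negbTE (valP s1)).
    by apply: adj_out; rewrite ?(valP s1) ?(valP s2).
  - exact: (adjN _ (valP s1)).
  - by rewrite adjC; exact: (adjN _ (valP s2)).
  - by rewrite eqxx in ne.
move=> uZ; have [w wZ uw] := to_Z u uZ.
have -> : None = cend Z w by apply/esym/eqP; rewrite cend_eqNone.
by apply: adj_cend; rewrite // (negbTE uZ).
Qed.

Definition prism_opp (i : 'I_6) : 'I_6 := Ordinal (ltn_pmod (i + 3) (isT : 0 < 6)).

(* The prism [C6bar]: two triangles on the even and on the odd vertices,
   joined by the perfect matching [i -- i + 3]. *)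
Definition prism_adj (i j : 'I_6) : bool :=
  (i != j) && (odd i == odd j) || (j == prism_opp i).

Lemma C6bar_adj (i j : 'I_6) : adj (G := C6bar) i j = prism_adj i j.
Proof.
rewrite sgraph_adj /prism_adj.
by case: i => [[|[|[|[|[|[|i]]]]]] Hi]; case: j => [[|[|[|[|[|[|j]]]]]] Hj];
  rewrite // -val_eqE.
Qed.

Lemma odd_prism_opp (i : 'I_6) : odd (prism_opp i) = ~~ odd i.
Proof. by case: i => [[|[|[|[|[|[|i]]]]]] Hi]. Qed.

Lemma prism_adj_same (i j : 'I_6) : odd i = odd j -> prism_adj i j = (i != j).
Proof.
move=> E; rewrite /prism_adj E eqxx andbT.
case: (j =P prism_opp i) => [Ej|]; rewrite ?orbF //.
by move: (odd_prism_opp i); rewrite -Ej -E; case: odd.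
Qed.

Lemma prism_adj_diff (i j : 'I_6) : odd i != odd j -> prism_adj i j = (j == prism_opp i).
Proof. by move=> /negbTE E; rewrite /prism_adj E andbF. Qed.

Definition is_prism G := [/\ loopless G, simple G &
  exists (io : 'I_6 -> vert G) ko, [/\ cancel io ko, cancel ko io &
     forall i j, adj (io i) (io j) = prism_adj i j]].

Lemma is_prism_C6bar : is_prism C6bar.
Proof.
split; [exact: sgraph_loopless | exact: sgraph_simple |].
by exists id, id; split => // i j; rewrite C6bar_adj.
Qed.

Lemma prism_iso G H : is_prism G -> is_prism H -> iso G H.
Proof.
case=> _ sG [io [ko [ik ki A]]] [_ sH [io' [ko' [ik' ki' A']]]].
apply: (@simple_iso G H (io' \o ko)) => //.
  by exists (io \o ko') => v /=; rewrite ?ik' ?ki ?ik ?ki'.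
by move=> u v /=; rewrite A' -A !ki.
Qed.

Section PrismDecomposition.
Variables (G : mgraph) (io : 'I_6 -> vert G) (ko : vert G -> 'I_6).
Hypotheses (lG : loopless G) (sG : simple G) (ik : cancel io ko) (ki : cancel ko io).
Hypothesis io_adj : forall i j, adj (io i) (io j) = prism_adj i j.

Lemma prism_adjE u v : adj u v = prism_adj (ko u) (ko v).
Proof. by rewrite -io_adj !ki. Qed.

Definition prism_triangle q := [set v | odd (ko v) == q].

Lemma prism_triangleC q : ~: prism_triangle q = prism_triangle (~~ q).
Proof. by apply/setP=> v; rewrite !inE; case: q; case: (odd _). Qed.

Lemma card_prism_triangle q : #|prism_triangle q| = 3.
Proof.
have ge3 q' : 2 < #|prism_triangle q'|.
  apply/card_gt2P; case: q'.
    by exists (io (inord 1)), (io (inord 3)), (io (inord 5));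
      rewrite !inE !ik ?inordK ?(inj_eq (can_inj ik)) // -!val_eqE /= !inordK.
  by exists (io (inord 0)), (io (inord 2)), (io (inord 4));
    rewrite !inE !ik ?inordK ?(inj_eq (can_inj ik)) // -!val_eqE /= !inordK.
have : #|prism_triangle q| + #|prism_triangle (~~ q)| = 6.
  rewrite -prism_triangleC cardsC -(card_ord 6); apply/esym/bij_eq_card.
  by exists ko.
by move: (ge3 q) (ge3 (~~ q)); lia.
Qed.

Lemma prism_contract_triangle q : iso (contract (prism_triangle q)) K4.
Proof.
have out u : (u \notin prism_triangle q) = (odd (ko u) == ~~ q).
  by rewrite !inE; case: q; case: (odd _).
apply/iso_K4P; split.
- exact: contract_loopless.
- apply: contract_simple => // u w1 w2; rewrite out !inE => /eqP ou /eqP o1 /eqP o2.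
  rewrite !prism_adjE !prism_adj_diff ?ou ?o1 ?o2 //; try by case: (q).
  by move=> /eqP E1 /eqP E2; apply: (can_inj ki); rewrite E1 E2.
- apply: contract_complete => [u v|u].
    rewrite !out => /eqP ou /eqP ov uv.
    by rewrite prism_adjE prism_adj_same ?ou ?ov // (inj_eq (can_inj ki)).
  rewrite out => /eqP ou; exists (io (prism_opp (ko u))).
    by rewrite inE ik odd_prism_opp ou negbK.
  by rewrite prism_adjE ik /prism_adj eqxx orbT.
- by rewrite card_contract prism_triangleC card_prism_triangle.
Qed.

End PrismDecomposition.

Lemma prism_K4_decomposition G : is_prism G -> has_K4_decomposition G.
Proof.
case=> lG sG [io [ko [ik ki A]]].
apply: (@K4_decomposition_split_K4 G (prism_triangle ko false)) => //.
  by rewrite prism_triangleC; exact: prism_contract_triangle.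
exact/iso_K4_decomposition_K4/prism_contract_triangle.
Qed.

Lemma simple_of_contract G (X : {set vert G}) :
  simple (contract X) -> simple (contract (~: X)) -> simple G.
Proof.
move=> sA sB e1 e2 S.
case: (boolP ((src e1 \in X) && (tgt e1 \in X))) => H1.
  have H1' : ~~ ((src e1 \in ~: X) && (tgt e1 \in ~: X)).
    by case/andP: H1 => h _; rewrite inE h.
  have H2' : ~~ ((src e2 \in ~: X) && (tgt e2 \in ~: X)) by rewrite -(same_ends_in2 _ S).
  have := sB (exist _ e1 H1' : edge (contract (~: X))) (exist _ e2 H2') (same_ends_map _ S).
  by case.
have H2 : ~~ ((src e2 \in X) && (tgt e2 \in X)) by rewrite -(same_ends_in2 _ S).
by have := sA (exist _ e1 H1 : edge (contract X)) (exist _ e2 H2) (same_ends_map _ S); case.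
Qed.

Lemma loopless_of_contract G (X : {set vert G}) :
  loopless (contract X) -> loopless (contract (~: X)) -> loopless G.
Proof.
move=> lA lB e; apply/negP => /eqP E.
case: (boolP (src e \in X)) => sX.
  have H : ~~ ((src e \in ~: X) && (tgt e \in ~: X)) by rewrite inE sX.
  by move: (lB (exist _ e H)); rewrite contract_src contract_tgt /= E eqxx.
have H : ~~ ((src e \in X) && (tgt e \in X)) by rewrite (negbTE sX).
by move: (lA (exist _ e H)); rewrite contract_src contract_tgt /= E eqxx.
Qed.

Section TwoK4Sides.
Variables (G : mgraph) (X : {set vert G}).
Hypotheses (lG : loopless G) (iA : iso (contract X) K4) (iB : iso (contract (~: X)) K4).

Lemma two_K4_sides_card : #|X| = 3.
Proof. by rewrite -(K4_contract_card iB) setCK. Qed.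

Lemma two_K4_sides_adj u v : (u \in X) = (v \in X) -> u != v -> adj u v.
Proof.
move=> uvX uv; apply/adjP; case: (boolP (u \in X)) => uX.
  by apply: (K4_contract_adj iB); rewrite ?inE -?uvX ?uX.
by apply: (K4_contract_adj iA); rewrite -?uvX.
Qed.

Lemma two_K4_sides_cross_uniq u w1 w2 : (u \in X) != (w1 \in X) ->
  (w1 \in X) = (w2 \in X) -> adj u w1 -> adj u w2 -> w1 = w2.
Proof.
case: (boolP (u \in X)) => uX /= w1X w12X.
  by apply: (K4_contract_cross_uniq iB); rewrite ?inE -?w12X ?uX.
by apply: (K4_contract_cross_uniq iA); rewrite -?w12X ?(negbNE w1X).
Qed.

Lemma two_K4_sides_partner u : exists2 w, (w \in X) = ~~ (u \in X) & adj u w.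
Proof.
case: (boolP (u \in X)) => uX.
  have uXC : u \notin ~: X by rewrite inE uX.
  have [e [w [wX S]]] := K4_contract_cross_edge iB uXC.
  by exists w; [move: wX; rewrite inE => /negbTE -> | apply/adjP; exists e].
have [e [w [wX S]]] := K4_contract_cross_edge iA uX.
by exists w; [rewrite wX | apply/adjP; exists e].
Qed.

Lemma two_K4_sides_simple : simple G.
Proof.
have /iso_K4P[_ sA _ _] := iA; have /iso_K4P[_ sB _ _] := iB.
exact: simple_of_contract sA sB.
Qed.

Lemma two_K4_sides_partner_neq x y x' y' : x \in X -> y \in X -> x != y ->
  adj x x' -> adj y y' -> x' \notin X -> x' != y'.
Proof.
move=> xX yX xy xx' yy' x'X; apply: contraNneq xy => E; apply/eqP.
apply: (@two_K4_sides_cross_uniq x'); rewrite ?xX ?yX ?(negbTE x'X) //.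
  by rewrite adjC.
by rewrite E adjC.
Qed.

Lemma two_K4_sides_prism_of (io : 'I_6 -> vert G) ko : cancel io ko -> cancel ko io ->
  (forall i, (io i \in X) = ~~ odd i) -> (forall i, adj (io i) (io (prism_opp i))) ->
  is_prism G.
Proof.
move=> ik ki io_side io_partner; split=> //; first exact: two_K4_sides_simple.
exists io, ko; split => // i j.
case: (boolP (odd i == odd j)) => /eqP oij.
  rewrite prism_adj_same //; case: (eqVneq i j) => [->|nij]; first exact: adj_loopless.
  by apply: two_K4_sides_adj; rewrite ?io_side ?oij // (can_eq ik).
rewrite prism_adj_diff; last exact/eqP.
apply/idP/eqP => [aij|->]; last exact: io_partner.
apply: (can_inj ik); apply: (@two_K4_sides_cross_uniq (io i)) (io_partner i) => //.
  by rewrite !io_side; move: oij; case: (odd i); case: (odd j).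
by rewrite !io_side odd_prism_opp; move: oij; case: (odd i); case: (odd j).
Qed.

(* Label the triangle [X] by the even and its partners by the odd vertices of
   [C6bar]: [a, c', b, a', c, b'] with [x'] the partner of [x]. *)
Lemma two_K4_sides_prism : is_prism G.
Proof.
have : 2 < #|X| by rewrite two_K4_sides_card.
case/card_gt2P=> a [b [c [[aX bX cX] [ab bc ca]]]].
have [a' +  aa'] := two_K4_sides_partner a; rewrite aX => /negbT a'X.
have [b' +  bb'] := two_K4_sides_partner b; rewrite bX => /negbT b'X.
have [c' +  cc'] := two_K4_sides_partner c; rewrite cX => /negbT c'X.
have a'b' := two_K4_sides_partner_neq aX bX ab aa' bb' a'X.
have b'c' := two_K4_sides_partner_neq bX cX bc bb' cc' b'X.
have c'a' := two_K4_sides_partner_neq cX aX ca cc' aa' c'X.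
have side_neq x y : x \in X -> y \notin X -> x != y.
  by move=> xX; apply: contraNneq => <-.
pose L := [:: a; c'; b; a'; c; b'].
have Lu : uniq L.
  rewrite /= !inE !negb_or; do !(apply/andP; split);
    by [| apply: side_neq | rewrite eq_sym; apply: side_neq | rewrite eq_sym].
pose io (i : 'I_6) := nth a L i.
have inL v : v \in L.
  case: (boolP (v \in X)) => vX.
    have := card3_mem two_K4_sides_card aX bX cX ab bc ca vX.
    by rewrite !inE; case/or3P=> /eqP->; rewrite eqxx ?orbT.
  have inC x : x \notin X -> x \in ~: X by rewrite inE.
  have := card3_mem (K4_contract_card iA) (inC _ a'X) (inC _ b'X) (inC _ c'X)
    a'b' b'c' c'a' (inC _ vX).
  by rewrite !inE; case/or3P=> /eqP->; rewrite eqxx ?orbT.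
have [ko ik ki] : bijective io.
  apply: inj_surj_bij => [i j /eqP|v].
    by rewrite /io nth_uniq ?size_tuple // => /eqP /val_inj.
  have lt : index v L < 6 by rewrite -[6]/(size L) index_mem.
  by exists (Ordinal lt); rewrite /io nth_index.
apply: (two_K4_sides_prism_of ik ki) => i.
  by rewrite /io; case: i => [[|[|[|[|[|[|i]]]]]] Hi] //=;
    rewrite ?aX ?bX ?cX ?(negbTE a'X) ?(negbTE b'X) ?(negbTE c'X).
by rewrite /io; case: i => [[|[|[|[|[|[|i]]]]]] Hi] //=; rewrite // adjC.
Qed.

End TwoK4Sides.

(** * K4-ends and triangles of K4-decomposable graphs *)

(* [X] is a triangle hanging off the rest of [G] by a 3-cut, and the rest
   [G/X] is still K4-decomposable. *)
Definition K4_end G (X : {set vert G}) :=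
  iso (contract (~: X)) K4 /\ has_K4_decomposition (contract X).

Definition triangle G (x y z : vert G) :=
  [&& x != y, x != z, y != z, adj x y, adj x z & adj y z].

Definition two_disjoint_triangles G := exists (x1 y1 z1 x2 y2 z2 : vert G),
  [/\ triangle x1 y1 z1, triangle x2 y2 z2 &
      forall v, v \in [:: x1; y1; z1] -> v \notin [:: x2; y2; z2]].

Section LiftK4End.
Variables (G : mgraph) (S : {set vert G}) (Y : {set vert (contract (~: S))}).
Hypotheses (lG : loopless G) (cS : #|cut S| = 3) (c2 : 1 < #|~: S|).
Hypotheses (dS : has_K4_decomposition (contract S)) (eY : K4_end Y) (nY : None \notin Y).

Let phi := cend (~: S).
Let lB : loopless (contract (~: S)) := contract_loopless lG.

Definition lift_end := phi @^-1: Y.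

Lemma cend_compl_out v : v \notin S -> phi v = None.
Proof. by move=> vS; apply/eqP; rewrite cend_eqNone inE. Qed.

Lemma lift_subset : lift_end \subset S.
Proof.
apply/subsetP=> v; rewrite inE; case: (boolP (v \in S)) => // vS.
by rewrite cend_compl_out // (negbTE nY).
Qed.

Lemma lift_neq0 : lift_end != set0.
Proof.
case: eY => iY _; have : 0 < #|Y| by rewrite -(setCK Y) (K4_contract_card iY).
case/card_gt0P => y yY.
have [|v _ Ev] := cend_Some (w := y); first by apply: contraNneq nY => <-.
by apply/set0Pn; exists v; rewrite inE -[phi v]/(cend (~: S) v) Ev.
Qed.

Lemma lift_K4_side : iso (contract (~: lift_end)) K4.
Proof.
case: eY => iY _; have /set0Pn[u1 u1S] := card_gt1_neq0 c2.
apply: iso_trans iY.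
apply: (@quotient_map_iso G (contract (~: lift_end)) (contract (~: Y))
  (cend (~: lift_end)) (cend (~: Y) \o phi)).
- apply: contract_quotient_map lG _; apply/set0Pn; exists u1.
  by rewrite !inE cend_compl_out ?(negbTE nY) //; move: u1S; rewrite inE.
- apply: quotient_map_comp; first exact: contract_quotient_map (card_gt1_neq0 c2).
  by apply: contract_quotient_map lB _; apply/set0Pn; exists None; rewrite inE.
move=> u v /=; rewrite (@cend_eq (contract (~: S)) (~: Y) (phi u) (phi v)).
rewrite [phi u == phi v]cend_eq !cend_eq !inE.
case: (boolP (u \in S)) => uS; case: (boolP (v \in S)) => vS /=.
- by rewrite orbF.
- by rewrite (cend_compl_out vS) (negbTE nY) !andbT orbF.
- by rewrite (cend_compl_out uS) (negbTE nY) /= orbF.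
- by rewrite (cend_compl_out uS) (cend_compl_out vS) (negbTE nY) /= !orbT.
Qed.

Lemma lift_proper : exists2 x, x \in S & x \notin lift_end.
Proof.
case: eY => _ dY.
have : 1 < #|~: Y|.
  by have := K4_decomposition_card dY; rewrite card_contract; lia.
case/card_gt1P => w1 [w2 [w1Y w2Y ne]].
have [w wY wN] : exists2 w, w \in ~: Y & w != None.
  case: (eqVneq w1 None) => [E|]; last by exists w1.
  by exists w2; rewrite // -E eq_sym.
case: (cend_Some wN) => x; rewrite inE negbK => xS Ex; exists x => //.
by rewrite inE -[phi x]/(cend (~: S) x) Ex; move: wY; rewrite inE.
Qed.

(* [S] seen in [G/lift_end], where the contracted vertex lies inside [S]. *)
Definition lift_side : {set vert (contract lift_end)} :=
  [set w : vert (contract lift_end) | if w is Some s then val s \in S else true].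

Lemma cend_lift_side v : (cend lift_end v \in lift_side) = (v \in S).
Proof.
rewrite inE /cend; case: insubP => [s _ Es|/negbNE vY]; first by rewrite Es.
by rewrite (subsetP lift_subset).
Qed.

Let qL : @quotient_map G (contract lift_end) (cend lift_end) :=
  contract_quotient_map lG lift_neq0.

Lemma lift_nontrivial_3cut : nontrivial_3cut lift_side.
Proof.
have /card_gt1P[u1 [u2 [u1S u2S u12]]] := c2.
move: u1S u2S; rewrite !inE => u1S u2S.
have u1Y : u1 \notin lift_end by apply: contra u1S; apply: (subsetP lift_subset).
have [x1 x1S x1Y] := lift_proper.
split.
- apply/card_gt1P; exists None, (cend lift_end x1); split; rewrite ?cend_lift_side ?inE //.
  by rewrite eq_sym cend_eqNone.
- apply/card_gt1P; exists (cend lift_end u1), (cend lift_end u2).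
  rewrite !in_setC !cend_lift_side u1S u2S.
  by split=> //; rewrite cend_eq negb_or u12 /= (negbTE u1Y).
- rewrite -(card_cut_preimset lift_side qL).
  by have -> : cend lift_end @^-1: lift_side = S by apply/setP=> v; rewrite inE cend_lift_side.
Qed.

Lemma lift_contract_side : iso (contract lift_side) (contract S).
Proof.
have [x1 x1S _] := lift_proper.
apply: (@quotient_map_iso G (contract lift_side) (contract S)
  (cend lift_side \o cend lift_end) (cend S)).
- apply: quotient_map_comp qL (contract_quotient_map (contract_loopless lG) _).
  by apply/set0Pn; exists None; rewrite inE.
- by apply: contract_quotient_map lG _; apply/set0Pn; exists x1.
move=> u v /=; rewrite (@cend_eq (contract lift_end) lift_side) !cend_lift_side !cend_eq.
case: (boolP (u \in lift_end)) => uY; case: (boolP (v \in lift_end)) => vY /=;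
  rewrite ?orbF //; by rewrite !(subsetP lift_subset _ uY) ?(subsetP lift_subset _ vY) ?orbT.
Qed.

Lemma lift_contract_compl : iso (contract (~: lift_side)) (contract Y).
Proof.
have /set0Pn[u1 u1S] := card_gt1_neq0 c2.
apply: (@quotient_map_iso G (contract (~: lift_side)) (contract Y)
  (cend (~: lift_side) \o cend lift_end) (cend Y \o phi)).
- apply: quotient_map_comp qL (contract_quotient_map (contract_loopless lG) _).
  by apply/set0Pn; exists (cend lift_end u1); rewrite in_setC cend_lift_side -in_setC.
- apply: quotient_map_comp (contract_quotient_map lG (card_gt1_neq0 c2)) _.
  apply: contract_quotient_map lB _; have /set0Pn[v0] := lift_neq0.
  by rewrite inE => h; apply/set0Pn; exists (phi v0).
move=> u v /=.
rewrite (@cend_eq (contract lift_end) (~: lift_side)) (@cend_eq (contract (~: S)) Y).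
rewrite !in_setC !cend_lift_side !cend_eq !inE -!orbA; congr (_ || _).
by rewrite orbC.
Qed.

Lemma lift_K4_end : exists2 Y1 : {set vert G}, K4_end Y1 & Y1 \subset S.
Proof.
exists lift_end; last exact: lift_subset.
split; first exact: lift_K4_side.
have [_ dY] := eY; have lL : loopless (contract lift_end) := contract_loopless lG.
apply: (K4dec_split lift_nontrivial_3cut).
  exact: iso_K4_decomposition (contract_loopless lL) lift_contract_side dS.
exact: iso_K4_decomposition (contract_loopless lL) lift_contract_compl dY.
Qed.

End LiftK4End.

Definition decomposition_shape G := iso G K4 \/
  ((forall w : vert G, exists2 X, K4_end X & w \notin X) /\ two_disjoint_triangles G).

Section SideOfCut.
Variables (G : mgraph) (S : {set vert G}).
Hypothesis shape : decomposition_shape (contract (~: S)).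

Lemma K4_end_in_side : loopless G -> #|cut S| = 3 -> 1 < #|~: S| ->
  has_K4_decomposition (contract S) -> exists2 Y, K4_end Y & Y \subset S.
Proof.
move=> lG cS c2 dS; case: shape => [iB|[ends _]]; first by exists S.
by have [Y eY nY] := ends None; exact: lift_K4_end lG cS c2 dS eY nY.
Qed.

Lemma triangle_in_side : exists x y z, triangle x y z /\ {subset [:: x; y; z] <= S}.
Proof.
case: shape => [iB|[_ [x1 [y1 [z1 [x2 [y2 [z2 [t1 t2 dj]]]]]]]]].
  have : 2 < #|S| by rewrite -(setCK S) (K4_contract_card iB).
  case/card_gt2P=> x [y [z [[xS yS zS] [xy yz zx]]]].
  have ad u v : u \in S -> v \in S -> u != v -> adj u v.
    by move=> uS vS uv; apply/adjP; apply: (K4_contract_adj iB); rewrite ?inE ?negbK.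
  exists x, y, z; split; last by move=> v; rewrite !inE => /or3P[]/eqP->.
  by rewrite /triangle xy yz eq_sym zx !ad // eq_sym.
have [x [y [z [t nN]]]] :
    exists x y z : vert (contract (~: S)), triangle x y z /\ None \notin [:: x; y; z].
  case: (boolP (None \in [:: x1; y1; z1])) => h1; last by exists x1, y1, z1.
  by exists x2, y2, z2; split; last exact: dj.
move: nN t; rewrite !inE !negb_or !(eq_sym None) => /and3P[xN yN zN].
case: (cend_Some xN) => x'; rewrite inE negbK => x'S <-.
case: (cend_Some yN) => y'; rewrite inE negbK => y'S <-.
case: (cend_Some zN) => z'; rewrite inE negbK => z'S <-.
move=> /and3P[nxy nxz /and4P[nyz axy axz ayz]].
have down u v : u \in S -> v \in S ->
    adj (G := contract (~: S)) (cend (~: S) u) (cend (~: S) v) -> adj u v.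
  by move=> uS vS; apply: adj_contract; rewrite inE negbK.
exists x', y', z'; split; last by move=> v; rewrite !inE => /or3P[]/eqP->.
have n1 : x' != y' by apply: contraNneq nxy => ->.
have n2 : x' != z' by apply: contraNneq nxz => ->.
have n3 : y' != z' by apply: contraNneq nyz => ->.
by rewrite /triangle n1 n2 n3 !down.
Qed.

End SideOfCut.

Lemma K4_decomposition_shape G : loopless G -> has_K4_decomposition G -> decomposition_shape G.
Proof.
move=> + dG; elim: dG => {G} [G _ iG|G X [c1 c2 c3] dA IHA dB IHB] lG; first by left.
have shapeA := IHA (contract_loopless lG); have shapeB := IHB (contract_loopless lG).
rewrite -(setCK X) in shapeA.
right; split.
  move=> w; case: (boolP (w \in X)) => wX.
    have cC : #|cut (~: X)| = 3 by rewrite cutC.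
    have c1C : 1 < #|~: ~: X| by rewrite setCK.
    have [Y eY sub] := K4_end_in_side shapeA lG cC c1C dB.
    by exists Y => //; apply: contraL wX => /(subsetP sub); rewrite inE.
  have [Y eY sub] := K4_end_in_side shapeB lG c3 c2 dA.
  by exists Y => //; apply: contra wX => /(subsetP sub).
have [x1 [y1 [z1 [t1 s1]]]] := triangle_in_side shapeB.
have [x2 [y2 [z2 [t2 s2]]]] := triangle_in_side shapeA.
exists x1, y1, z1, x2, y2, z2; split=> // v /s1 vX; apply: contraL vX => /s2.
by rewrite inE.
Qed.

(** * Graphs two edges away from bipartite *)

Definition almost_bipartite G :=
  exists F : {set edge G}, #|F| <= 2 /\ bipartite_in (~: F).

Lemma triangle_in (G : mgraph) (x y z v : vert G) :
  triangle x y z -> v \in [:: x; y; z] -> in_triangle v.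
Proof.
move=> /and3P[xy xz /and4P[yz axy axz ayz]].
rewrite !inE => /or3P[]/eqP->.
- by exists y, z; rewrite eq_sym xy eq_sym xz yz axy axz ayz.
- by exists x, z; rewrite xy eq_sym yz xz adjC axy ayz axz.
- by exists x, y; rewrite xz yz xy adjC axz adjC ayz axy.
Qed.

(* An odd cycle meets every set of edges whose deletion leaves a bipartite graph. *)
Lemma triangle_meets_odd_set G (x y z : vert G) (F : {set edge G}) :
  triangle x y z -> bipartite_in (~: F) ->
  exists2 e, e \in F & (src e \in [:: x; y; z]) && (tgt e \in [:: x; y; z]).
Proof.
move=> /and3P[_ _ /and4P[_ /adjP[e1 S1] /adjP[e2 S2] /adjP[e3 S3]]] [col Hc].
have key e u v : same_ends (src e) (tgt e) u v -> e \notin F -> col u != col v.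
  move=> S eF; have := Hc e; rewrite inE eF => /(_ isT).
  by case/same_endsP: S => [[->->]|[->->]] //; rewrite eq_sym.
have ends e u v : same_ends (src e) (tgt e) u v -> u \in [:: x; y; z] ->
    v \in [:: x; y; z] -> (src e \in [:: x; y; z]) && (tgt e \in [:: x; y; z]).
  by move=> S hu hv; case/same_endsP: S => [[->->]|[->->]]; rewrite hu hv.
have mx : x \in [:: x; y; z] by rewrite !inE eqxx.
have my : y \in [:: x; y; z] by rewrite !inE eqxx ?orbT.
have mz : z \in [:: x; y; z] by rewrite !inE eqxx ?orbT.
case: (boolP (e1 \in F)) => h1; first by exists e1 => //; exact: ends S1 mx my.
case: (boolP (e2 \in F)) => h2; first by exists e2 => //; exact: ends S2 mx mz.
case: (boolP (e3 \in F)) => h3; first by exists e3 => //; exact: ends S3 my mz.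
move: (key _ _ _ S1 h1) (key _ _ _ S2 h2) (key _ _ _ S3 h3).
by case: (col x); case: (col y); case: (col z).
Qed.

(* Two disjoint triangles cannot share the single edge of [F1], so one of them
   contains an edge of [F2] and hence [x]. *)
Lemma in_triangle_of_odd_set G (x : vert G) (F1 F2 : {set edge G}) :
  #|F1| <= 1 -> (forall f, f \in F2 -> (src f == x) || (tgt f == x)) ->
  bipartite_in (~: (F1 :|: F2)) -> two_disjoint_triangles G -> in_triangle x.
Proof.
move=> cF1 F2x bip [x1 [y1 [z1 [x2 [y2 [z2 [t1 t2 dj]]]]]]].
have [f1 f1F /andP[s1 u1]] := triangle_meets_odd_set t1 bip.
have [f2 f2F /andP[s2 u2]] := triangle_meets_odd_set t2 bip.
case: (boolP (f1 \in F2)) => h1.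
  by case/orP: (F2x _ h1) => /eqP E; apply: (triangle_in t1); rewrite -E.
case: (boolP (f2 \in F2)) => h2.
  by case/orP: (F2x _ h2) => /eqP E; apply: (triangle_in t2); rewrite -E.
move: f1F f2F; rewrite !inE (negbTE h1) (negbTE h2) !orbF => g1 g2.
have ff : f1 = f2 by move/card_le1_eqP: cF1 => /(_ f1 f2 g1 g2).
by subst f2; move: (dj _ s1); rewrite s2.
Qed.

Lemma card3_two_same_colour (T : finType) (X : {set T}) (col : T -> bool) : #|X| = 3 ->
  exists p q r, [/\ col p = col q, [/\ p \in X, q \in X & r \in X],
                    [/\ p != q, q != r & r != p] & {subset X <= [:: p; q; r]}].
Proof.
move=> cX; have : 2 < #|X| by rewrite cX.
case/card_gt2P=> a [b [c [[aX bX cX'] [ab bc ca]]]].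
have all3 := card3_mem cX aX bX cX' ab bc ca.
have [ba cb ac] : [/\ b != a, c != b & a != c] by rewrite eq_sym ab eq_sym bc eq_sym ca.
case: (eqVneq (col a) (col b)) => [E|nab]; first by exists a, b, c.
case: (eqVneq (col a) (col c)) => [E|nac].
  exists a, c, b; split => //.
  by move=> v /all3; rewrite !inE => /or3P[] ->; rewrite ?orbT.
exists b, c, a; split => //.
  by move: nab nac; case: (col a); case: (col b); case: (col c).
by move=> v /all3; rewrite !inE => /or3P[] ->; rewrite ?orbT.
Qed.

Section ContractOddSet.
Variables (G : mgraph) (X : {set vert G}).

Lemma card_contract_odd_set (F : {set edge G}) e0 : e0 \in F ->
  (src e0 \in X) && (tgt e0 \in X) -> #|[set e : edge (contract X) | val e \in F]| < #|F|.
Proof.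
move=> e0F e0X.
have sub : val @: [set e : edge (contract X) | val e \in F] \subset F :\ e0.
  apply/subsetP => _ /imsetP[e + ->]; rewrite !inE => ->; rewrite andbT.
  by apply: contraNneq (contract_edgeP e) => ->.
have := subset_leq_card sub; rewrite card_imset; last exact: val_inj.
by rewrite (cardsD1 e0 F) e0F add1n ltnS.
Qed.

(* Give the contracted vertex the colour [col p] shared by all of [X] but [r]. *)
Lemma contract_recolour (F : {set edge G}) (col : vert G -> bool) p r :
  (forall v, v \in X -> v != r -> col v = col p) ->
  (forall e, e \in ~: F -> col (src e) != col (tgt e)) ->
  bipartite_in (~: ([set e : edge (contract X) | val e \in F] :|:
                    [set e : edge (contract X) | incident (val e) r])).
Proof.
move=> colX col_proper.
pose col' (w : vert (contract X)) := if w is Some s then col (val s) else col p.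
have col'E v : v \notin X -> col' (cend X v) = col v.
  by move=> vX; rewrite /cend; case: insubP => [s _ <- //|]; rewrite vX.
have col'N v : v \in X -> col' (cend X v) = col p.
  by move=> vX; have /eqP -> : cend X v == None by rewrite cend_eqNone.
exists col' => e; rewrite !inE negb_or => /andP[n1 n2].
rewrite contract_src contract_tgt.
have hc : col (src (val e)) != col (tgt (val e)) by apply: col_proper; rewrite inE.
move: n2 (contract_edgeP e); rewrite /incident negb_or => /andP[sr tr].
case: (boolP (src (val e) \in X)) => sX /= tX.
  by rewrite col'N // col'E // -(colX _ sX sr).
case: (boolP (tgt (val e) \in X)) => {}tX.
  by rewrite col'E // col'N // -(colX _ tX tr).
by rewrite !col'E.
Qed.

Hypothesis iB : iso (contract (~: X)) K4.

Lemma K4_end_edges_at r : r \in X ->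
  #|[set e : edge (contract X) | incident (val e) r]| <= 1.
Proof.
move=> rX; apply/card_le1_eqP => e1 e2; rewrite !inE => i1 i2; apply: val_inj.
have out (e : edge (contract X)) : incident (val e) r ->
    ~~ ((src (val e) \in ~: X) && (tgt (val e) \in ~: X)) /\
    same_ends (cend (~: X) (src (val e))) (cend (~: X) (tgt (val e))) (cend (~: X) r) None.
  move=> ie; have S := other_endP ie.
  have oX : other_end r (val e) \notin X.
    by apply/negP => oX; move: (contract_edgeP e); rewrite (same_ends_in2 X S) rX oX.
  split; first by rewrite (same_ends_in2 (~: X) S) inE rX.
  have := same_ends_map (cend (~: X)) S.
  by have /eqP -> : cend (~: X) (other_end r (val e)) == None by rewrite cend_eqNone inE.
have [n1 s1] := out e1 i1; have [n2 s2] := out e2 i2.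
apply/esym/(K4_contract_edge_inj iB n1 n2).
by rewrite same_endsC in s2; exact: same_ends_trans s1 s2.
Qed.

(* Contracting a K4-end keeps [G] within two edges of bipartite: two vertices
   [p], [q] of the triangle [X] share a colour, so [pq] is deleted and at most
   one other deleted edge survives; colouring the contracted vertex like [p]
   and [q] can only spoil the edge leaving the third vertex [r]. *)
Lemma K4_end_contract_odd_set (F : {set edge G}) (col : vert G -> bool) : #|F| <= 2 ->
  (forall e, e \in ~: F -> col (src e) != col (tgt e)) ->
  exists F1 F2 : {set edge (contract X)},
  [/\ #|F1| <= 1, #|F2| <= 1,
      forall f, f \in F2 -> (src f == None) || (tgt f == None)
    & bipartite_in (~: (F1 :|: F2))].
Proof.
move=> cF col_proper.
have cX : #|X| = 3 by rewrite -(K4_contract_card iB) setCK.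
have [p [q [r [cpq [pX qX rX] [pq _ _] allX]]]] := card3_two_same_colour col cX.
have colX v : v \in X -> v != r -> col v = col p.
  by move=> /allX; rewrite !inE => /or3P[]/eqP-> //; rewrite ?cpq ?eqxx.
have [epq Spq] : exists e, same_ends (src e) (tgt e) p q.
  by apply: (K4_contract_adj iB); rewrite ?inE ?negbK.
have epqF : epq \in F.
  apply/negPn/negP => h; have := @col_proper epq; rewrite inE h => /(_ isT).
  by case/same_endsP: Spq => [[->->]|[->->]]; rewrite cpq eqxx.
have epqX : (src epq \in X) && (tgt epq \in X) by rewrite (same_ends_in2 X Spq) pX qX.
exists [set e | val e \in F], [set e | incident (val e) r]; split.
- by rewrite -ltnS; apply: leq_trans (card_contract_odd_set epqF epqX) cF.
- exact: K4_end_edges_at.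
- move=> f; rewrite inE /incident contract_src contract_tgt !cend_eqNone.
  by case/orP=> /eqP->; rewrite rX ?orbT.
- exact: contract_recolour colX col_proper.
Qed.

End ContractOddSet.

Lemma K4_decomposition_tri_ladder n G : #|vert G| <= n -> loopless G ->
  almost_bipartite G -> has_K4_decomposition G -> iso G K4 \/ tri_ladder G.
Proof.
elim: n G => [|n IH] G cG lG [F [cF [col col_proper]]] dG.
  by move: (leq_trans (K4_decomposition_card dG) cG).
case: (K4_decomposition_shape lG dG) => [iK|[ends [w _]]]; first by left.
right; have [X [iB dX] _] := ends w.
have [F1 [F2 [cF1 cF2 F2N bip]]] := K4_end_contract_odd_set iB cF col_proper.
have lX : loopless (contract X) := contract_loopless lG.
have cX : #|vert (contract X)| <= n.
  have := K4_contract_card iB; rewrite setCK card_contract -(cardsC X) in cG *; lia.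
have abX : almost_bipartite (contract X).
  by exists (F1 :|: F2); split => //; rewrite cardsU; lia.
have prism_case : iso (contract X) K4 -> tri_ladder G.
  by move=> iA; apply/TL_base/prism_iso/is_prism_C6bar; exact: two_K4_sides_prism iA iB.
case: (IH _ cX lX abX dX) => [|tlX]; first exact: prism_case.
case: (K4_decomposition_shape lX dX) => [|[_ two]]; first exact: prism_case.
have [f [g [bf bg E]]] := iB.
apply: (@TL_step G (contract X) None (f None) tlX).
  exact: in_triangle_of_odd_set cF1 F2N bip two.
exists X; split; last by exists f, g.
by exists id, id; split; try exists id; move=> //= e; exact: same_ends_refl.
Qed.

Lemma tri_ladder_K4_decomposition G : tri_ladder G -> loopless G /\ has_K4_decomposition G.
Proof.
elim=> {G} [G iG|G H v k _ [lH dH] _ [X [iA iB]]].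
  have lG := iso_loopless iG (@sgraph_loopless 6 _).
  by split=> //; exact: iso_K4_decomposition lG iG (prism_K4_decomposition is_prism_C6bar).
have {}iA := iso_at_iso iA; have {}iB := iso_at_iso iB.
have lA := iso_loopless iA lH.
have lG := loopless_of_contract lA (iso_loopless iB (@sgraph_loopless 4 _)).
by split=> //; apply: K4_decomposition_split_K4 lG iB (iso_K4_decomposition lA iA dH).
Qed.

Theorem mainTheorem14 (G : mgraph) :
  loopless G -> cubic G -> brick G -> near_bipartite G -> 6 <= #|vert G| ->
  (has_K4_decomposition G <-> tri_ladder G).
Proof.
move=> lG _ _ [_ _ [e1 [e2 [_ [bip _]]]]] c6.
split=> [dG|/tri_ladder_K4_decomposition[] //].
have abG : almost_bipartite G by exists [set e1; e2]; rewrite cards2; case: (e1 != e2).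
have [iK|//] := K4_decomposition_tri_ladder (leqnn _) lG abG dG.
by move: c6; rewrite (card_iso iK) card_ord.
Qed.
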